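(* Let $T\subseteq P_{2n}$ be transitive and closed under reversal. Then: 1. $(i,j)\in T$ implies $S_{2n,i,j}\in B_{2n}(T)$. 2. If $i\in[2n]$ and $v\in\mathbb{F}^{2n}$ is supported on $\{j:(j,i)\in T\}$, then $S_{2n,v,i}\in B_{2n}(T)$. 3. The set $\{S_{2n,i,j}: j\in[n],\ j+1\le i\le 2n+1-j,\ (i,j)\in T\}$ generates $B_{2n}(T)$. 4. Every $B\in B_{2n}(T)$ satisfies $B=S_{2n,V_n(B)e_{n,1},1}\cdots S_{2n,V_n(B)e_{n,n},n}$, and each factor $S_{2n,V_n(B)e_{n,j},j}$ lies in $B_{2n}(T)$ and is a product of generators from part 3; this gives a canonical expression of each element of $B_{2n}(T)$ in terms of these generators.
   Context: $\mathbb{F}$ is the field with two elements, $e_{N,i}$ standard basis column vectors, $I_N$ the identity, $[N]=\{1,\dots,N\}$. $R_{2n}=\sum_{i=1}^{2n}e_{2n,i}e_{2n,2n+1-i}^{\top}$; $\mathrm{Sp}_{2n}=\{C:C^{\top}R_{2n}C=R_{2n}\}$. $P_{2n}=\{(i,j):i,j\in[2n],i>j\}$. $T\subseteq P_{2n}$ is transitive if $(i,j),(j,k)\in T\Rightarrow(i,k)\in T$, and closed under reversal if $(i,j)\in T\iff(2n+1-j,2n+1-i)\in T$. $B_{2n}(T)=\big(I_{2n}+\mathrm{span}_{\mathbb{F}}\{e_{2n,i}e_{2n,j}^{\top}:(i,j)\in T\}\big)\cap\mathrm{Sp}_{2n}$. For $i\ne j\in[2n]$: $S_{2n,i,j}=I_{2n}+e_{2n,i}e_{2n,j}^{\top}$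 if $i+j=2n+1$, else $S_{2n,i,j}=I_{2n}+e_{2n,i}e_{2n,j}^{\top}+e_{2n,2n+1-j}e_{2n,2n+1-i}^{\top}$. For $v\in\mathbb{F}^{2n}$ with $v_i=0$: $S_{2n,v,i}=I_{2n}+ve_{2n,i}^{\top}+R_{2n}e_{2n,i}v^{\top}R_{2n}+v_{2n+1-i}e_{2n,2n+1-i}e_{2n,i}^{\top}$. $V_n(B)=\sum_{j=1}^n\sum_{i=j+1}^{2n+1-j}e_{2n,i}e_{2n,i}^{\top}Be_{2n,j}e_{n,j}^{\top}$. *)

(* Matrices over F = 'F_2, dimension 2n written n + n,
   indices 0-based: paper index i in [2n] corresponds to ordinal i-1. *)
From mathcomp Require Import all_boot all_order all_algebra.
Set Implicit Arguments. Unset Strict Implicit. Unset Printing Implicit Defensive.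
Import GRing.Theory.
Local Open Scope ring_scope.

Notation F := 'F_2.

Definition evec (N : nat) (i : 'I_N) : 'cV[F]_N := delta_mx i 0.

Definition Rmx (n : nat) : 'M[F]_(n + n) :=
  \matrix_(i, j) (j == rev_ord i)%:R.

Definition Sp (n : nat) (C : 'M[F]_(n + n)) : Prop :=
  C^T *m Rmx n *m C = Rmx n.

(* T as a relation: T i j  <->  (i,j) \in T *)
Definition subP (n : nat) (T : rel 'I_(n + n)) : Prop :=
  forall i j, T i j -> (j < i)%N.
Definition transitiveT (n : nat) (T : rel 'I_(n + n)) : Prop :=
  forall i j k, T i j -> T j k -> T i k.
Definition rev_closed (n : nat) (T : rel 'I_(n + n)) : Prop :=
  forall i j, T i j <-> T (rev_ord j) (rev_ord i).

Definition inB (n : nat) (T : rel 'I_(n + n)) (M : 'M[F]_(n + n)) : Prop :=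
  (exists c : 'I_(n + n) -> 'I_(n + n) -> F,
      M = 1%:M + \sum_(i < n + n) \sum_(j < n + n | T i j)
                   c i j *: (evec i *m (evec j)^T))
  /\ Sp M.

Definition Sij (n : nat) (i j : 'I_(n + n)) : 'M[F]_(n + n) :=
  if j == rev_ord i then 1%:M + evec i *m (evec j)^T
  else 1%:M + evec i *m (evec j)^T
       + evec (rev_ord j) *m (evec (rev_ord i))^T.

Definition Svi (n : nat) (v : 'cV[F]_(n + n)) (i : 'I_(n + n)) : 'M[F]_(n + n) :=
  1%:M + v *m (evec i)^T + Rmx n *m evec i *m v^T *m Rmx n
  + v (rev_ord i) 0 *: (evec (rev_ord i) *m (evec i)^T).

Definition Vn (n : nat) (B : 'M[F]_(n + n)) : 'M[F]_(n + n, n) :=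
  \sum_(j < n) \sum_(i < n + n | (j < i)%N && (i < n + n - j)%N)
     (evec i *m (evec i)^T *m B *m evec (lshift n j) *m (evec j)^T).

(* generating set of part 3 (0-based: j < n, j+1 <= i <= 2n-1-j) *)
Definition gens (n : nat) (T : rel 'I_(n + n)) (M : 'M[F]_(n + n)) : Prop :=
  exists (i : 'I_(n + n)) (j : 'I_n),
    [/\ (j < i)%N, (i < n + n - j)%N, T i (lshift n j) & M = Sij i (lshift n j)].

Inductive generated (N : nat) (G : 'M[F]_N -> Prop) : 'M[F]_N -> Prop :=
| gen_one : generated G 1%:M
| gen_base M : G M -> generated G M
| gen_mul M1 M2 : generated G M1 -> generated G M2 -> generated G (M1 *m M2)
| gen_inv M : generated G M -> generated G (invmx M).

Definition prod_of (N : nat) (G : 'M[F]_N -> Prop) (M : 'M[F]_N) : Prop :=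
  exists s : seq 'M[F]_N, (forall g, g \in s -> G g) /\
                          M = \big[mulmx/1%:M]_(g <- s) g.

(* Write S_{v,i} = 1 + N_{v,i} and i' = 2n+1-i. For v_i = u_i = 0 the product
   N_{v,i} N_{u,i} is a multiple of e_{i'} e_i^T, whence the multiplication rule
   S_{v,i} S_{u,i} = S_{v+u+<Rv,u> e_{i'}, i}; as <Rv,v> = 0 over F_2, S_{v,i} is an
   involution fixed by the symplectic adjoint A |-> R A^T R, hence symplectic.
   Transitivity and reversal-closedness of T make the condition "A - 1 is supported
   on T" stable under products and adjoints, so B_{2n}(T) is a group containing
   the S_{i,j} and S_{v,i}.
   Conversely, B in B_{2n}(T) is unipotent lower triangular. If its first j-1
   columns are unit vectors, then so are its last j-1 rows (B is symplectic), so
   column j of B is e_j + V_n(B) e_j, which is also column j of the involution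
   S_j = S_{V_n(B) e_j, j}. Hence S_j B has one more unit column and the same
   later columns of V_n, and induction gives B = S_1 ... S_n. Finally the
   multiplication rule splits each S_{v,j} into generators S_{a,j}, with an extra
   generator S_{j',j} whenever a correction term <Rv,e_a> e_{j'} appears. *)

From mathcomp Require Import all_boot all_order all_algebra.
From mathcomp Require Import ring zify.
Set Implicit Arguments. Unset Strict Implicit. Unset Printing Implicit Defensive.
Import GRing.Theory.
Local Open Scope ring_scope.

Lemma F2_addrr (x : F) : x + x = 0.
Proof. by apply: addrr_pchar2; apply: pchar_Fp. Qed.

Lemma F2_mx_addrr m p (A : 'M[F]_(m, p)) : A + A = 0.
Proof. by apply/matrixP => a b; rewrite !mxE F2_addrr. Qed.

Lemma F2_cases (x : F) : x = 0 \/ x = 1.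
Proof. by case: x => [[|[|//]]] /= H; [left|right]; apply/val_inj. Qed.

Lemma natr_andb (R : pzSemiRingType) (b1 b2 : bool) :
  ((b1 && b2)%:R : R) = b1%:R * b2%:R.
Proof. by rewrite -mulnb natrM. Qed.

Lemma sum_delta (R : pzSemiRingType) (I : finType) (k : I) (G : I -> R) :
  \sum_c (c == k)%:R * G c = G k.
Proof.
rewrite (bigD1 k) //= eqxx mul1r big1 ?addr0 // => c /negbTE ->.
by rewrite mul0r.
Qed.

Lemma mulmx_entry_neq0 (R : pzSemiRingType) m p q
    (A : 'M[R]_(m, p)) (B : 'M[R]_(p, q)) a b :
  (A *m B) a b != 0 -> exists k, A a k != 0 /\ B k b != 0.
Proof.
case: [exists k, (A a k != 0) && (B k b != 0)] / existsP => [[k /andP[]]|noK].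
  by exists k.
rewrite mxE big1 ?eqxx // => k _.
have [->|Ak] := eqVneq (A a k) 0; first by rewrite mul0r.
have [->|Bk] := eqVneq (B k b) 0; first by rewrite mulr0.
by case: noK; exists k; rewrite Ak Bk.
Qed.

Lemma mx_addE N M (A B : 'M[F]_(N, M)) a b : (A + B) a b = A a b + B a b.
Proof. by rewrite mxE. Qed.

Lemma mx_subE N M (A B : 'M[F]_(N, M)) a b : (A - B) a b = A a b - B a b.
Proof. by rewrite !mxE. Qed.

Lemma mx_scaleE N M (x : F) (A : 'M[F]_(N, M)) a b : (x *: A) a b = x * A a b.
Proof. by rewrite mxE. Qed.

Lemma mx1E N (a b : 'I_N) : (1%:M : 'M[F]_N) a b = (a == b)%:R.
Proof. by rewrite mxE. Qed.

Lemma evecE N (i a : 'I_N) b : evec i a b = (a == i)%:R.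
Proof. by rewrite mxE [b]ord1 andbT. Qed.

Lemma outer_mxE N M (x : 'cV[F]_N) (y : 'cV[F]_M) a b :
  (x *m y^T) a b = x a 0 * y b 0.
Proof. by rewrite mxE big_ord1 mxE. Qed.

Lemma mulmx_evecE N p (A : 'M[F]_(p, N)) (j : 'I_N) a z :
  (A *m evec j) a z = A a j.
Proof.
rewrite mxE -[RHS](sum_delta j (A a)).
by apply: eq_bigr => k _; rewrite evecE mulrC.
Qed.

Definition dot N (x y : 'cV[F]_N) : F := (x^T *m y) 0 0.

Lemma dotE N (x y : 'cV[F]_N) : dot x y = \sum_c x c 0 * y c 0.
Proof. by rewrite /dot mxE; apply: eq_bigr => c _; rewrite mxE. Qed.

Lemma dot_evecl N (i : 'I_N) y : dot (evec i) y = y i 0.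
Proof.
rewrite dotE -[RHS](sum_delta i (y^~ 0)).
by apply: eq_bigr => c _; rewrite evecE.
Qed.

Lemma dot_evecr N (i : 'I_N) y : dot y (evec i) = y i 0.
Proof.
rewrite dotE -[RHS](sum_delta i (y^~ 0)).
by apply: eq_bigr => c _; rewrite evecE mulrC.
Qed.

Lemma outer_mul N (a b c d : 'cV[F]_N) :
  (a *m b^T) *m (c *m d^T) = dot b c *: (a *m d^T).
Proof.
by rewrite mulmxA -(mulmxA a) [b^T *m c]mx11_scalar mul_mx_scalar -scalemxAl.
Qed.

Lemma cV_sum_evec N (v : 'cV[F]_N) : v = \sum_(a | v a 0 != 0) evec a.
Proof.
apply/matrixP => b z; rewrite [z]ord1 summxE.
rewrite big_mkcond -[LHS](sum_delta b (v^~ 0)); apply: eq_bigr => a _.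
by rewrite evecE eq_sym; case: (F2_cases (v a 0)) => ->;
  rewrite ?eqxx ?oner_eq0 ?mulr0 ?mulr1.
Qed.

Lemma eq_rev_ord N (a b : 'I_N) : (rev_ord a == b) = (a == rev_ord b).
Proof. by apply/eqP/eqP => [<-|->]; rewrite rev_ordK. Qed.

Lemma rev_ord_eq2 N (a b : 'I_N) : (rev_ord a == rev_ord b) = (a == b).
Proof. exact: (inj_eq rev_ord_inj). Qed.

Section Reversal.
Variable n : nat.
Implicit Types (A B : 'M[F]_(n + n)) (a b c i : 'I_(n + n)).

Lemma rev_ord_neq i : (rev_ord i == i) = false.
Proof. by apply/negbTE/eqP => /(congr1 val) /=; case: i => i /= ?; lia. Qed.

Lemma RmxE a b : Rmx n a b = (b == rev_ord a)%:R.
Proof. by rewrite mxE. Qed.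

Lemma mulRmxE p (A : 'M[F]_(n + n, p)) a (b : 'I_p) :
  (Rmx n *m A) a b = A (rev_ord a) b.
Proof.
rewrite mxE -[RHS](sum_delta _ (A^~ b)).
by apply: eq_bigr => c _; rewrite RmxE.
Qed.

Lemma mulmxRE p (A : 'M[F]_(p, n + n)) (a : 'I_p) b :
  (A *m Rmx n) a b = A a (rev_ord b).
Proof.
rewrite mxE -[RHS](sum_delta _ (A a)).
by apply: eq_bigr => c _; rewrite RmxE mulrC eq_sym eq_rev_ord.
Qed.

Lemma trmx_Rmx : (Rmx n)^T = Rmx n.
Proof. by apply/matrixP => a b; rewrite !mxE -eq_rev_ord eq_sym. Qed.

Lemma mulRR : Rmx n *m Rmx n = 1%:M.
Proof. by apply/matrixP => a b; rewrite mulRmxE RmxE rev_ordK mx1E eq_sym. Qed.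

Lemma Rmx_evec i : Rmx n *m evec i = evec (rev_ord i).
Proof. by apply/matrixP => a b; rewrite mulRmxE !evecE eq_rev_ord. Qed.

Lemma dot_Rmx_alt (v : 'cV[F]_(n + n)) : dot (Rmx n *m v) v = 0.
Proof.
rewrite dotE (eq_bigr (fun c => v (rev_ord c) 0 * v c 0)); last first.
  by move=> c _; rewrite mulRmxE.
rewrite big_split_ord /= [X in _ + X](reindex_inj rev_ord_inj) /=.
(* the summands for c and rev_ord c coincide *)
set s := \sum_(c < n) _; rewrite -[RHS](F2_addrr s).
congr (_ + _); apply: eq_bigr => c _.
have -> : rshift n (rev_ord c) = rev_ord (lshift n c).
  by apply/val_inj => /=; case: c => c /= ?; lia.
by rewrite rev_ordK mulrC.
Qed.

Definition sp_adj A : 'M[F]_(n + n) := Rmx n *m A^T *m Rmx n.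

Lemma sp_adjE A a b : sp_adj A a b = A (rev_ord b) (rev_ord a).
Proof. by rewrite mulmxRE mulRmxE mxE. Qed.

Lemma sp_adjK : involutive sp_adj.
Proof. by move=> A; apply/matrixP => a b; rewrite !sp_adjE !rev_ordK. Qed.

Lemma sp_adjM A B : sp_adj (A *m B) = sp_adj B *m sp_adj A.
Proof.
by rewrite /sp_adj trmx_mul !mulmxA -(mulmxA _ (Rmx n) (Rmx n)) mulRR mulmx1.
Qed.

Lemma SpE A : Sp A <-> sp_adj A *m A = 1%:M.
Proof.
rewrite /Sp /sp_adj -!mulmxA; split => [->|H]; first exact: mulRR.
by rewrite -[LHS]mul1mx -mulRR -mulmxA H mulmx1.
Qed.

Lemma Sp1 : Sp (1%:M : 'M[F]_(n + n)).
Proof. by apply/SpE; rewrite /sp_adj trmx1 !mulmx1 mulRR. Qed.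

Lemma Sp_mul A B : Sp A -> Sp B -> Sp (A *m B).
Proof.
move=> /SpE HA /SpE HB; apply/SpE.
by rewrite sp_adjM mulmxA -(mulmxA _ _ A) HA mulmx1 HB.
Qed.

Lemma Sp_sp_adj A : Sp A -> Sp (sp_adj A).
Proof. by move=> /SpE /mulmx1C HA; apply/SpE; rewrite sp_adjK. Qed.

Lemma invmx_Sp A : Sp A -> invmx A = sp_adj A.
Proof.
move=> /SpE HA; have [_ unitA] := mulmx1_unit HA.
by rewrite -[LHS]mul1mx -HA -mulmxA mulmxV // mulmx1.
Qed.

End Reversal.

Section Support.
Variables (n : nat) (T : rel 'I_(n + n)).
Implicit Types (A B M : 'M[F]_(n + n)).

Definition supp M := forall a b, (M - 1%:M) a b != 0 -> T a b.

Lemma supp_entry M a b : supp M -> ~~ T a b -> M a b = (a == b)%:R.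
Proof.
move=> sM; apply: contraNeq; rewrite -subr_eq0 -mx1E -mx_subE; exact: sM.
Qed.

Lemma inB_entry (c : 'I_(n + n) -> 'I_(n + n) -> F) a b :
  (\sum_(i < n + n) \sum_(j < n + n | T i j) c i j *: (evec i *m (evec j)^T)) a b
  = if T a b then c a b else 0.
Proof.
rewrite summxE -[RHS](sum_delta a (fun i => if T i b then c i b else 0)).
apply: eq_bigr => i _; rewrite summxE big_mkcond /=.
rewrite -[RHS](sum_delta b (fun j => (i == a)%:R * if T i j then c i j else 0)).
apply: eq_bigr => j _; case: (T i j); last by rewrite !mulr0.
by rewrite mx_scaleE outer_mxE !evecE (eq_sym a) (eq_sym b); ring.
Qed.

Lemma inB_iff M : inB T M <-> supp M /\ Sp M.
Proof.
split => [[[c ->] SpM]|[sM SpM]]; split=> //.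
  move=> a b; rewrite [1%:M + _]addrC addrK inB_entry.
  by case: (T a b); rewrite ?eqxx.
exists (fun i j => (M - 1%:M) i j); apply/matrixP => a b.
rewrite mx_addE inB_entry mx1E; case: ifP => Tab.
  by rewrite mx_subE mx1E addrC subrK.
by rewrite (supp_entry sM) ?Tab ?addr0.
Qed.

Lemma supp1 : supp 1%:M.
Proof. by move=> a b; rewrite subrr mxE eqxx. Qed.

Lemma supp_mul A B : transitiveT T -> supp A -> supp B -> supp (A *m B).
Proof.
move=> Ttr sA sB a b.
have -> : A *m B - 1%:M = (A - 1%:M) *m (B - 1%:M) + (A - 1%:M) + (B - 1%:M).
  rewrite mulmxBl !mulmxBr mulmx1 mul1mx mulmx1.
  by apply/matrixP => x y; rewrite !mxE; ring.
rewrite 2!mx_addE.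
have [->|/mulmx_entry_neq0 [k [/sA Tak /sB Tkb]] _] :=
  eqVneq (((A - 1%:M) *m (B - 1%:M)) a b) 0; last exact: Ttr Tak Tkb.
have [->|/sA //] := eqVneq ((A - 1%:M) a b) 0.
by rewrite !add0r => /sB.
Qed.

Lemma supp_sp_adj A : rev_closed T -> supp A -> supp (sp_adj A).
Proof.
move=> Trev sA a b.
rewrite mx_subE sp_adjE mx1E -rev_ord_eq2 [rev_ord a == _]eq_sym -mx1E -mx_subE.
by move=> /sA /Trev; rewrite !rev_ordK.
Qed.

Lemma inB1 : inB T 1%:M.
Proof. by apply/inB_iff; split; [exact: supp1 | exact: Sp1]. Qed.

Lemma inB_mul A B : transitiveT T -> inB T A -> inB T B -> inB T (A *m B).
Proof.
move=> Ttr /inB_iff[sA SpA] /inB_iff[sB SpB]; apply/inB_iff.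
by split; [exact: supp_mul | exact: Sp_mul].
Qed.

Lemma inB_invmx A : rev_closed T -> inB T A -> inB T (invmx A).
Proof.
move=> Trev /inB_iff[sA SpA]; apply/inB_iff; rewrite invmx_Sp //.
by split; [exact: supp_sp_adj | exact: Sp_sp_adj].
Qed.

End Support.

Section Transvections.
Variable n : nat.
Implicit Types (v u : 'cV[F]_(n + n)) (i j a b m : 'I_(n + n)).

Definition Nvi v i : 'M[F]_(n + n) :=
  v *m (evec i)^T + evec (rev_ord i) *m (Rmx n *m v)^T
  + v (rev_ord i) 0 *: (evec (rev_ord i) *m (evec i)^T).

Lemma Svi_Nvi v i : Svi v i = 1%:M + Nvi v i.
Proof.
by rewrite /Svi /Nvi Rmx_evec trmx_mul trmx_Rmx -!addrA -!mulmxA.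
Qed.

Lemma NviE v i a b : Nvi v i a b =
  v a 0 * (b == i)%:R + (a == rev_ord i)%:R * v (rev_ord b) 0
  + v (rev_ord i) 0 * ((a == rev_ord i) && (b == i))%:R.
Proof.
rewrite !mx_addE mx_scaleE !outer_mxE !evecE mulRmxE natr_andb mulrA.
by rewrite [v (rev_ord i) 0 * _]mulrC.
Qed.

Lemma SviE v i a b : Svi v i a b =
  (a == b)%:R + v a 0 * (b == i)%:R + (a == rev_ord i)%:R * v (rev_ord b) 0
  + v (rev_ord i) 0 * ((a == rev_ord i) && (b == i))%:R.
Proof. by rewrite Svi_Nvi mx_addE NviE mx1E !addrA. Qed.

Lemma Svi0 i : Svi 0 i = 1%:M.
Proof. by apply/matrixP => a b; rewrite SviE mx1E !mxE !mul0r mulr0 !addr0. Qed.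

Lemma Nvi_mul v u i : v i 0 = 0 -> u i 0 = 0 ->
  Nvi v i *m Nvi u i = dot (Rmx n *m v) u *: (evec (rev_ord i) *m (evec i)^T).
Proof.
move=> vi0 ui0.
rewrite /Nvi !mulmxDl !mulmxDr -!scalemxAl -!scalemxAr !outer_mul.
rewrite !dot_evecl !dot_evecr ui0 !evecE eq_sym rev_ord_neq mulRmxE rev_ordK vi0.
by rewrite !scale0r !scaler0 !add0r !addr0.
Qed.

Lemma Svi_mul v u i : v i 0 = 0 -> u i 0 = 0 ->
  Svi v i *m Svi u i = Svi (v + u + dot (Rmx n *m v) u *: evec (rev_ord i)) i.
Proof.
move=> vi0 ui0; rewrite !Svi_Nvi mulmxDl mul1mx mulmxDr mulmx1 Nvi_mul //.
set d := dot _ _; apply/matrixP => a b.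
rewrite !(mx_addE, mx_scaleE, NviE, mx1E, outer_mxE, evecE) rev_ord_eq2 eqxx.
(* the corner entry d occurs three times on the right, once on the left *)
rewrite !natr_andb -[LHS]addr0.
rewrite -(F2_addrr (d * ((a == rev_ord i)%:R * (b == i)%:R))).
by rewrite mulr1n; ring.
Qed.

Lemma Svi_invol v i : v i 0 = 0 -> Svi v i *m Svi v i = 1%:M.
Proof.
by move=> vi0; rewrite Svi_mul // dot_Rmx_alt scale0r addr0 F2_mx_addrr Svi0.
Qed.

Lemma sp_adj_Svi v i : sp_adj (Svi v i) = Svi v i.
Proof.
apply/matrixP => a b; rewrite sp_adjE !SviE !rev_ordK !rev_ord_eq2.
by rewrite eq_rev_ord (eq_sym b a) andbC; ring.
Qed.

Lemma Sp_Svi v i : v i 0 = 0 -> Sp (Svi v i).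
Proof. by move=> vi0; apply/SpE; rewrite sp_adj_Svi Svi_invol. Qed.

Lemma Svi_col v i m : Svi v i m i = (m == i)%:R + v m 0.
Proof.
rewrite SviE eqxx andbT mulr1 [v (rev_ord i) 0 * _]mulrC -addrA F2_addrr addr0.
by rewrite eq_sym.
Qed.

Lemma Svi_mul_row v i a p (A : 'M[F]_(n + n, p)) x : a != rev_ord i ->
  (Svi v i *m A) a x = A a x + v a 0 * A i x.
Proof.
move=> ari; rewrite mxE.
under eq_bigr => y _ do
  rewrite SviE (negbTE ari) andFb !mul0r mulr0 !addr0 mulrDl -mulrA eq_sym.
by rewrite big_split /= sum_delta -mulr_sumr sum_delta.
Qed.

Lemma Sij_Svi i j : Sij i j = Svi (evec i) j.
Proof.
apply/matrixP => a b; rewrite SviE !evecE /Sij.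
case: ifP => [/eqP ->|jri]; rewrite !mx_addE mx1E !outer_mxE !evecE.
  by rewrite rev_ordK eqxx natr_andb mul1r eq_rev_ord -addrA F2_addrr addr0.
by rewrite !eq_rev_ord jri mul0r addr0.
Qed.

End Transvections.

Section Generators.
Variables (n : nat) (T : rel 'I_(n + n)).
Hypotheses (Tsub : subP T) (Ttr : transitiveT T) (Trev : rev_closed T).

Lemma Svi_inB i (v : 'cV[F]_(n + n)) :
  (forall j, v j 0 != 0 -> T j i) -> inB T (Svi v i).
Proof.
move=> vT; have vi0 : v i 0 = 0.
  by apply/eqP; apply: contraTT isT => /vT /Tsub; rewrite ltnn.
apply/inB_iff; split; last exact: Sp_Svi.
move=> a b; rewrite Svi_Nvi [1%:M + _]addrC addrK NviE.
have [->|bi] := eqVneq b i; have [->|ari] := eqVneq a (rev_ord i);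
  rewrite ?eqxx ?(negbTE bi) ?(negbTE ari);
  rewrite ?(mulr1, mulr0, mul0r, mul1r, addr0, add0r).
- by rewrite -addrA F2_addrr addr0 => /vT.
- by move=> /vT.
- by move=> /vT /Trev; rewrite rev_ordK.
- by rewrite eqxx.
Qed.

Lemma Sij_inB i j : T i j -> inB T (Sij i j).
Proof.
move=> Tij; rewrite Sij_Svi; apply: Svi_inB => k; rewrite evecE.
by have [->|] := eqVneq k i; rewrite ?eqxx.
Qed.

Lemma generated_inB M : generated (gens T) M -> inB T M.
Proof.
elim=> {M} [|M [i [j [_ _ Tij ->]]]|M1 M2 _ BM1 _ BM2|M _ BM].
- exact: inB1.
- exact: Sij_inB.
- exact: inB_mul.
- exact: inB_invmx.
Qed.

End Generators.

Definition lower {N} : rel 'I_N := fun a b => (b < a)%N.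

Lemma lower_trans n : transitiveT (@lower (n + n)).
Proof. by move=> i j k ji kj; apply: ltn_trans kj ji. Qed.

Lemma lower_rev_closed n : rev_closed (@lower (n + n)).
Proof. by move=> [i ?] [j ?]; rewrite /lower /=; split=> ?; lia. Qed.

Lemma evec_projE N p (A : 'M[F]_(N, p)) i a b :
  (evec i *m (evec i)^T *m A) a b = (a == i)%:R * A i b.
Proof.
rewrite mxE -[RHS](sum_delta i (fun c => (a == i)%:R * A c b)).
by apply: eq_bigr => c _; rewrite outer_mxE !evecE mulrCA mulrA.
Qed.

Lemma mulmx_col_eq N p (A : 'M[F]_(p, N)) (B C : 'M[F]_N) m c :
  (forall x, B x c = C x c) -> (A *m B) m c = (A *m C) m c.
Proof. by move=> BC; rewrite !mxE; apply: eq_bigr => x _; rewrite BC. Qed.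

Section Elimination.
Variable n : nat.
Implicit Types (B : 'M[F]_(n + n)) (a b c m : 'I_(n + n)).

Definition vcol B (j : 'I_n) : 'cV[F]_(n + n) :=
  \col_a (((j < a)%N && (a < n + n - j)%N)%:R * B a (lshift n j)).

Lemma Vn_col B j : Vn B *m evec j = vcol B j.
Proof.
apply/matrixP => a z; rewrite mulmx_evecE /Vn summxE mxE.
under eq_bigr => k _ do rewrite summxE.
under eq_bigr => k _ do under eq_bigr => i _ do
  rewrite outer_mxE mulmx_evecE evec_projE evecE.
under eq_bigr => k _ do rewrite -mulr_suml.
under eq_bigr => k _ do rewrite mulrC eq_sym.
rewrite sum_delta big_mkcond /=.
rewrite -[RHS](sum_delta a
  (fun i => ((j < i)%N && (i < n + n - j)%N)%:R * B i (lshift n j))).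
apply: eq_bigr => i _; rewrite eq_sym.
by case: ifP; rewrite ?mul1r ?mul0r ?mulr0.
Qed.

Definition unit_col B c := forall m, B m c = (m == c)%:R.

Definition cleared (j : nat) B :=
  [/\ Sp B, supp lower B & forall k : 'I_n, (k < j)%N -> unit_col B (lshift n k)].

Lemma Sp_unit_row B c : Sp B -> unit_col B c ->
  forall b, B (rev_ord c) b = (b == rev_ord c)%:R.
Proof.
move=> /SpE SpB Bc b.
have := congr1 (fun X : 'M[F]_(n + n) => X (rev_ord b) c) SpB.
rewrite /= mxE mx1E eq_rev_ord.
under eq_bigr => m _ do rewrite Bc mulrC.
by rewrite sum_delta sp_adjE rev_ordK.
Qed.

Definition Vfactor B j : 'M[F]_(n + n) := Svi (vcol B j) (lshift n j).

Lemma vcol_lshift B j : vcol B j (lshift n j) 0 = 0.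
Proof. by rewrite mxE /= ltnn mul0r. Qed.

Lemma Vfactor_inB B j : inB lower (Vfactor B j).
Proof.
apply: Svi_inB => [//||a]; first exact: lower_rev_closed.
by rewrite mxE /lower /=; case: ltnP; rewrite ?mul0r ?eqxx.
Qed.

Lemma Vfactor_invol B j : Vfactor B j *m Vfactor B j = 1%:M.
Proof. exact/Svi_invol/vcol_lshift. Qed.

Lemma cleared_col B (j : 'I_n) m : cleared j B ->
  B m (lshift n j) = (m == lshift n j)%:R + vcol B j m 0.
Proof.
case=> SpB lowB fixB; rewrite mxE /=.
have [jm|mj] /= := ltnP j m; last first.
  by rewrite mul0r addr0 (supp_entry lowB) // /lower /= -leqNgt.
have mj : (m == lshift n j) = false := gtn_eqF jm.
rewrite mj add0r; have [|mge] := ltnP m (n + n - j); first by rewrite mul1r.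
have rm_j : (rev_ord m < j)%N by rewrite /=; have := ltn_ord m; lia.
have rm_n : (rev_ord m < n)%N := ltn_trans rm_j (ltn_ord j).
have := Sp_unit_row SpB (fixB (Ordinal rm_n) rm_j) (lshift n j).
have -> : rev_ord (lshift n (Ordinal rm_n)) = m.
  by apply/val_inj => /=; have := ltn_ord m; lia.
by move=> ->; rewrite eq_sym mj mul0r.
Qed.

Lemma Vfactor_col B (j : 'I_n) m : cleared j B ->
  Vfactor B j m (lshift n j) = B m (lshift n j).
Proof. by move=> clB; rewrite Svi_col (cleared_col _ clB). Qed.

Lemma vcol_rev_lshift B (j k : 'I_n) : (k < j)%N ->
  vcol B j (rev_ord (lshift n k)) 0 = 0.
Proof.
move=> kj; rewrite mxE /=.
have -> : (n + n - k.+1 < n + n - j)%N = false by lia.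
by rewrite andbF mul0r.
Qed.

Lemma cleared_step B (j : 'I_n) :
  cleared j B -> cleared j.+1 (Vfactor B j *m B).
Proof.
move=> clB; have [SpB lowB fixB] := clB.
have /inB_iff [lowS SpS] := Vfactor_inB B j.
split; [exact: Sp_mul | exact: supp_mul (@lower_trans n) lowS lowB |].
move=> k; rewrite ltnS leq_eqVlt => /orP[/eqP/val_inj -> | kj] m.
  rewrite (@mulmx_col_eq _ _ _ _ (Vfactor B j)) => [|x]; last first.
    exact/esym/Vfactor_col.
  by rewrite Vfactor_invol mx1E.
rewrite (@mulmx_col_eq _ _ _ _ 1%:M) => [|x]; last by rewrite fixB // mx1E.
have kj' : (lshift n k == lshift n j) = false := ltn_eqF kj.
by rewrite mulmx1 SviE kj' vcol_rev_lshift // andbF !mulr0 !addr0.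
Qed.

Lemma vcol_Vfactor_mul B (j k : 'I_n) : cleared j B -> (j < k)%N ->
  vcol (Vfactor B j *m B) k = vcol B k.
Proof.
case=> _ lowB _ jk; apply/matrixP => a z; rewrite [LHS]mxE [RHS]mxE.
case: (boolP ((k < a)%N && (a < n + n - k)%N)) => [/andP[ka akn]|]; last first.
  by rewrite !mul0r.
rewrite Svi_mul_row; last by apply: contraTneq akn => -> /=; rewrite -leqNgt; lia.
rewrite [B (lshift n j) _](supp_entry lowB) /lower /=; last by rewrite -leqNgt ltnW.
by rewrite (ltn_eqF jk : (lshift n j == lshift n k) = false) mulr0 addr0.
Qed.

Lemma cleared_n B : cleared n B -> B = 1%:M.
Proof.
case=> SpB lowB fixB; apply/matrixP => a b; rewrite mx1E.
have [bn|nb] := ltnP b n.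
  have -> : b = lshift n (Ordinal bn) by apply/val_inj.
  exact: fixB.
have [an|na] := ltnP a n.
  by apply: (supp_entry lowB); rewrite /lower -leqNgt ltnW // (leq_trans an nb).
have ra_n : (rev_ord a < n)%N by rewrite /=; have := ltn_ord a; lia.
have := Sp_unit_row SpB (fixB (Ordinal ra_n) ra_n) b.
have -> : rev_ord (lshift n (Ordinal ra_n)) = a.
  by apply/val_inj => /=; have := ltn_ord a; lia.
by move=> ->; rewrite eq_sym.
Qed.

(* Extended by 1 outside 'I_n, so that products can range over nat intervals. *)
Definition Vfactor_nat B (k : nat) := oapp (Vfactor B) 1%:M (insub k).

Lemma Vfactor_natE B (k : 'I_n) : Vfactor_nat B k = Vfactor B k.
Proof. by rewrite /Vfactor_nat valK. Qed.

Lemma cleared_prod j B : cleared j B ->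
  B = \big[mulmx/1%:M]_(j <= k < n) Vfactor_nat B k.
Proof.
move Hd: (n - j)%N => d; elim: d j B Hd => [|d IH] j B Hd clB.
  rewrite big_geq; last by lia.
  case: clB => SpB lowB fixB; apply: cleared_n; split=> // k _.
  by apply: fixB; have := ltn_ord k; lia.
have jn : (j < n)%N by lia.
pose jj := Ordinal jn.
have tail : \big[mulmx/1%:M]_(j.+1 <= k < n) Vfactor_nat (Vfactor B jj *m B) k
            = \big[mulmx/1%:M]_(j.+1 <= k < n) Vfactor_nat B k.
  apply: eq_big_nat => k /andP[jk kn].
  by rewrite -[k]/(nat_of_ord (Ordinal kn)) !Vfactor_natE /Vfactor vcol_Vfactor_mul.
have dS : (n - j.+1)%N = d by lia.
rewrite big_ltn // -[j]/(nat_of_ord jj) Vfactor_natE -tail.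
rewrite -(IH _ _ dS (cleared_step (j:=jj) clB)).
by rewrite mulmxA Vfactor_invol mul1mx.
Qed.

Lemma Vn_factorization (T : rel 'I_(n + n)) B : subP T -> inB T B ->
  B = \big[mulmx/1%:M]_(j < n) Svi (Vn B *m evec j) (lshift n j).
Proof.
move=> Tsub /inB_iff[sB SpB].
have clB : cleared 0 B by split=> // a b /sB /Tsub.
rewrite {1}(cleared_prod clB) big_mkord; apply: eq_bigr => k _.
by rewrite Vfactor_natE Vn_col.
Qed.

End Elimination.

Section Products.
Variables (N : nat) (G : 'M[F]_N -> Prop).

Lemma prod_of1 : prod_of G 1%:M.
Proof. by exists [::]; rewrite big_nil. Qed.

Lemma prod_of_base g : G g -> prod_of G g.
Proof.
move=> Gg; exists [:: g]; split=> [h /[!inE] /eqP -> //|].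
by rewrite big_cons big_nil mulmx1.
Qed.

Lemma prod_of_mul A B : prod_of G A -> prod_of G B -> prod_of G (A *m B).
Proof.
move=> [s [sG ->]] [t [tG ->]]; exists (s ++ t); split.
  by move=> g /[!mem_cat] /orP[/sG|/tG].
by rewrite mulmxE idmxE big_cat.
Qed.

Lemma generated_prod_of M : prod_of G M -> generated G M.
Proof.
move=> [s [sG ->]]; elim: s sG => [|g s IH] sG.
  by rewrite big_nil; exact: gen_one.
rewrite big_cons; apply: gen_mul; first by apply/gen_base/sG; rewrite inE eqxx.
by apply: IH => h hs; apply: sG; rewrite inE hs orbT.
Qed.

End Products.

Section GeneratorProducts.
Variables (n : nat) (T : rel 'I_(n + n)).
Hypotheses (Ttr : transitiveT T) (Trev : rev_closed T).

Definition gen_row (j : 'I_n) (a : 'I_(n + n)) : bool :=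
  [&& (j < a)%N, (a < n + n - j)%N & T a (lshift n j)].

Lemma gen_row_neq j a : gen_row j a -> a != lshift n j.
Proof. by case/and3P => ja _ _; apply: contraTneq ja => ->; rewrite ltnn. Qed.

Lemma gens_Svi_evec j a : gen_row j a -> gens T (Svi (evec a) (lshift n j)).
Proof. by case/and3P => ja ajn Taj; exists a, j; rewrite Sij_Svi. Qed.

Lemma gen_row_corner j m :
  gen_row j m -> gen_row j (rev_ord m) -> gen_row j (rev_ord (lshift n j)).
Proof.
case/and3P => _ _ /Trev Tm /and3P[_ _ Trm].
by rewrite /gen_row (Ttr Tm Trm) andbT /=; have := ltn_ord j; lia.
Qed.

Lemma vcol_gen_row B j a : supp T B -> vcol B j a 0 != 0 -> gen_row j a.
Proof.
move=> sB; rewrite mxE /gen_row.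
case: ((j < a)%N && (a < n + n - j)%N) / andP => [[ja ajn]|]; last first.
  by rewrite mul0r eqxx.
rewrite ja ajn mul1r => Baj; apply: sB.
by rewrite mx_subE mx1E (gtn_eqF ja : (a == lshift n j) = false) subr0.
Qed.

Lemma prod_gens_Svi_add j (w : 'cV[F]_(n + n)) m :
    (forall a, w a 0 != 0 -> gen_row j a) -> gen_row j m ->
    prod_of (gens T) (Svi w (lshift n j)) ->
  prod_of (gens T) (Svi (w + evec m) (lshift n j)).
Proof.
set i := lshift n j => wS mS Pw.
have wi0 : w i 0 = 0.
  by apply/eqP; apply: contraTT isT => /wS /gen_row_neq; rewrite eqxx.
have emi0 : evec m i 0 = 0 by rewrite evecE eq_sym (negbTE (gen_row_neq mS)).
have Pwm := prod_of_mul Pw (prod_of_base (gens_Svi_evec mS)).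
have := Svi_mul wi0 emi0; rewrite dot_evecr mulRmxE.
have [->|wrm] := F2_cases (w (rev_ord m) 0); first by rewrite scale0r addr0 => <-.
rewrite wrm scale1r => wmE.
(* the correction term e_(rev i) is cancelled by the generator S_(rev i, i) *)
have riS : gen_row j (rev_ord i).
  by apply: gen_row_corner mS _; apply: wS; rewrite wrm oner_neq0.
have eri0 : evec (rev_ord i) i 0 = 0 by rewrite evecE eq_sym rev_ord_neq.
have xi0 : (w + evec m + evec (rev_ord i)) i 0 = 0.
  by rewrite !mx_addE wi0 emi0 eri0 !addr0.
have := Svi_mul xi0 eri0; rewrite dot_evecr mulRmxE rev_ordK xi0 scale0r addr0.
rewrite -[_ + evec (rev_ord i) + _]addrA F2_mx_addrr addr0 -wmE => <-.
exact/(prod_of_mul Pwm)/prod_of_base/gens_Svi_evec.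
Qed.

Lemma Svi_prod_gens j (v : 'cV[F]_(n + n)) :
  (forall a, v a 0 != 0 -> gen_row j a) -> prod_of (gens T) (Svi v (lshift n j)).
Proof.
move=> vS; rewrite (cV_sum_evec v).
pose K (w : 'cV[F]_(n + n)) :=
  (forall a, w a 0 != 0 -> gen_row j a) /\ prod_of (gens T) (Svi w (lshift n j)).
suff [] : K (\sum_(a | v a 0 != 0) evec a) by [].
apply: (big_rec K) => [|a w va [wS Pw]].
  by split=> [a|]; rewrite ?mxE ?eqxx // Svi0; exact: prod_of1.
rewrite addrC; split; last exact: prod_gens_Svi_add (vS a va) Pw.
move=> b; rewrite mx_addE evecE; have [-> _|ba] := eqVneq b a; first exact: vS.
by rewrite addr0; exact: wS.
Qed.

End GeneratorProducts.

Theorem theorem2 (n : nat) (T : rel 'I_(n + n)) :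
  subP T -> transitiveT T -> rev_closed T ->
  [/\ (forall i j : 'I_(n + n), T i j -> inB T (Sij i j)),
      (forall (i : 'I_(n + n)) (v : 'cV[F]_(n + n)),
          (forall j, v j 0 != 0 -> T j i) -> inB T (Svi v i)),
      (forall M, inB T M <-> generated (gens T) M)
    & (forall B, inB T B ->
         B = \big[mulmx/1%:M]_(j < n) Svi (Vn B *m evec j) (lshift n j)
         /\ (forall j : 'I_n,
               inB T (Svi (Vn B *m evec j) (lshift n j))
               /\ prod_of (gens T) (Svi (Vn B *m evec j) (lshift n j))))].
Proof.
move=> Tsub Ttr Trev.
have factor_inB B j : inB T B -> inB T (Svi (Vn B *m evec j) (lshift n j)).
  case/inB_iff => sB _; rewrite Vn_col; apply: Svi_inB => // a.
  by case/(vcol_gen_row sB)/and3P.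
have factor_gens B j :
    inB T B -> prod_of (gens T) (Svi (Vn B *m evec j) (lshift n j)).
  case/inB_iff => sB _; rewrite Vn_col; apply: Svi_prod_gens => // a.
  exact: vcol_gen_row.
split.
- exact: Sij_inB.
- exact: Svi_inB.
- move=> M; split; last exact: generated_inB.
  move=> BM; rewrite (Vn_factorization Tsub BM).
  apply: (big_ind (generated (gens T))) => [||j _].
  + exact: gen_one.
  + exact: gen_mul.
  + exact/generated_prod_of/factor_gens.
- move=> B BB; split; first exact: Vn_factorization Tsub BB.
  by move=> j; split; [exact: factor_inB | exact: factor_gens].
Qed.
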